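(* Let $V = V_1 \oplus \cdots \oplus V_m$ be a finite-dimensional complex vector space decomposed as a direct sum, with dual decomposition $V^* = V_1^* \oplus \cdots \oplus V_m^*$, and let $T = \mathrm{Sym}(V^* )$, $T_i = \mathrm{Sym}(V_i^* ) \subset T$. Let $d \ge 2$, let $F_i \in S^d V_i$ and $t_i \in V_i^*$ for $i=1,\dots,m$, and let $F = F_1 + \cdots + F_m \in S^d V$. For each $i$, let $J_i \subset T$ be the ideal $$J_i = (F_i^{\perp} : t_i) + (t_i) + (V_1^*, \dots, V_{i-1}^*, V_{i+1}^*, \dots, V_m^* ),$$ where $F_i^\perp$ is the perp ideal of $F_i$ in $T_i$ and $(F_i^\perp : t_i) = \{g \in T_i : t_i g \in F_i^\perp\}$ (all regarded inside $T$ via $T_i \subset T$). Then $$(F^\perp : (t_1, \dots, t_m)) \subset J_1 \cap \cdots \cap J_m .$$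
   Context: For a complex vector space $W$, $S = \mathrm{Sym}(W) = \bigoplus_d S^d W$ and $\mathrm{Sym}(W^* )$ acts on $S$ by differentiation (apolarity action: linear forms in $W^*$ act as derivations). For $F \in S^d W$, the perp ideal is $F^\perp = \{ g \in \mathrm{Sym}(W^* ) : g\cdot F = 0\}$, a homogeneous ideal. For ideals $I, J$, the ideal quotient is $(I : J) = \{g : gJ \subset I\}$; $(F^\perp : (t_1,\dots,t_m))$ is the ideal quotient of $F^\perp$ (the perp ideal of $F$ in $T$) by the ideal generated by $t_1,\dots,t_m$. *)

From mathcomp Require Import all_boot all_algebra.
From mathcomp Require Import Rstruct.
From mathcomp Require Import complex.
From mathcomp Require Import mpoly.

Set Implicit Arguments.
Unset Strict Implicit.
Unset Printing Implicit Defensive.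
Import GRing.Theory.
Local Open Scope ring_scope.

Notation CC := (complex Rdefinitions.R).

(* V = C^n with standard basis e_0..e_{n-1}; Sym(V) = C[x_0..x_{n-1}] and
   Sym(V^* ) = C[y_0..y_{n-1}] (y_j the dual basis).  Both are represented by
   {mpoly CC[n]}; which one is meant is clear from the role. *)

(* Apolarity action of g in Sym(V^* ) on F in Sym(V): y_j acts as d/dx_j,
   so the monomial y^mo acts as the mixed partial derivative  d^mo. *)
Definition apolar (n : nat) (g F : {mpoly CC[n]}) : {mpoly CC[n]} :=
  \sum_(mo <- msupp g) g@_mo *: mderivm mo F.

Definition perp (n : nat) (F : {mpoly CC[n]}) : {mpoly CC[n]} -> Prop :=
  fun g => apolar g F = 0.

Definition ideal_gen (n : nat) (S : {mpoly CC[n]} -> Prop) : {mpoly CC[n]} -> Prop :=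
  fun h => exists s : seq ({mpoly CC[n]} * {mpoly CC[n]}),
      (forall q, q \in s -> S q.2) /\ h = \sum_(q <- s) q.1 * q.2.

Definition colon (n : nat) (I J : {mpoly CC[n]} -> Prop) : {mpoly CC[n]} -> Prop :=
  fun g => forall h, J h -> I (g * h).

(* The decomposition V = V_1 + ... + V_m: the basis vector e_j lies in
   V_(blk j).  A polynomial lies in Sym(V_i) (resp. Sym(V_i^* )) iff
   only the variables of block i occur in it. *)
Definition in_block (n m : nat) (blk : 'I_n -> 'I_m) (i : 'I_m)
    (p : {mpoly CC[n]}) : Prop :=
  forall mo, mo \in msupp p -> forall j : 'I_n, blk j != i -> mo j = 0%N.

Definition J_gens (n m : nat) (blk : 'I_n -> 'I_m) (Fi ti : {mpoly CC[n]})
    (i : 'I_m) : {mpoly CC[n]} -> Prop :=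
  fun g => (in_block blk i g /\ perp Fi (ti * g))
           \/ g = ti
           \/ (exists j : 'I_n, blk j != i /\ g = 'X_j).

(* Write g = g_i + r, where g_i collects the monomials of g that only involve
   variables of block i.  Apolarity between polynomials in disjoint sets of
   variables vanishes, so t_i g annihilates every F_k with k <> i (each
   monomial of t_i g involves a variable of block i), and t_i r annihilates
   F_i (each monomial of r involves a variable outside block i).  Hence
   0 = t_i g . F = t_i g_i . F_i, i.e. g_i lies in (F_i^perp : t_i), while
   r lies in the ideal generated by the variables outside block i. *)
From mathcomp Require Import all_boot all_algebra.
From mathcomp Require Import Rstruct.
From mathcomp Require Import complex.
From mathcomp Require Import mpoly.

Set Implicit Arguments.
Unset Strict Implicit.
Unset Printing Implicit Defensive.
Import GRing.Theory.
Local Open Scope ring_scope.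

Section MonomialBlocks.
Variables (n m : nat) (blk : 'I_n -> 'I_m).
Implicit Types (i k : 'I_m) (mo : 'X_{1..n}).

Definition mnm_in_block i mo : bool :=
  [forall j, (blk j != i) ==> (mo j == 0%N)].

Lemma mnm_in_blockP i mo :
  reflect (forall j, blk j != i -> mo j = 0%N) (mnm_in_block i mo).
Proof.
apply: (iffP forallP) => [h j bj | h j].
  by apply/eqP; move/implyP: (h j); apply.
by apply/implyP => /h ->.
Qed.

Lemma mnm_in_blockN i mo :
  ~~ mnm_in_block i mo -> exists2 j, blk j != i & (0 < mo j)%N.
Proof.
rewrite negb_forall => /existsP [j]; rewrite negb_imply => /andP [bj nz_j].
by exists j; rewrite // lt0n.
Qed.

Lemma mnm_in_blockD i m1 m2 :
  mnm_in_block i (m1 + m2)%MM = mnm_in_block i m1 && mnm_in_block i m2.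
Proof.
apply/mnm_in_blockP/andP => [h | [/mnm_in_blockP h1 /mnm_in_blockP h2] j bj].
  split; apply/mnm_in_blockP => j /h /eqP;
  by rewrite mnmDE addn_eq0 => /andP [/eqP ? /eqP ?].
by rewrite mnmDE h1 ?h2.
Qed.

Lemma mnm_in_block_other i k mo :
  mnm_in_block i mo -> mo != 0%MM -> k != i -> ~~ mnm_in_block k mo.
Proof.
move=> /mnm_in_blockP moi nz_mo nki; apply: contra nz_mo => /mnm_in_blockP mok.
apply/eqP/mnmP => j; rewrite mnm0E.
by case: (eqVneq (blk j) i) => [bj | /moi //]; apply: mok; rewrite bj eq_sym.
Qed.

End MonomialBlocks.

Section PolynomialBlocks.
Variables (n m : nat) (R : nzRingType) (blk : 'I_n -> 'I_m).
Implicit Types (i k : 'I_m) (p q : {mpoly R[n]}).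

Definition outside_block k p : Prop :=
  {in msupp p, forall mo, ~~ mnm_in_block blk k mo}.

Definition block_part i p : {mpoly R[n]} :=
  \sum_(mo <- msupp p | mnm_in_block blk i mo) p@_mo *: 'X_[mo].

Definition block_rest i p : {mpoly R[n]} :=
  \sum_(mo <- msupp p | ~~ mnm_in_block blk i mo) p@_mo *: 'X_[mo].

Lemma msupp_filter (P : pred 'X_{1..n}) p mo :
  mo \in msupp (\sum_(m <- msupp p | P m) p@_m *: 'X_[m] : {mpoly R[n]}) -> P mo.
Proof.
move/msupp_sum_le/flattenP => [s /mapP [x]].
rewrite mem_filter => /andP [Px _] -> /msuppZ_le.
by rewrite msuppX mem_seq1 => /eqP ->.
Qed.

Lemma block_part_rest i p : p = block_part i p + block_rest i p.
Proof. by rewrite {1}[p]mpolyE (bigID (mnm_in_block blk i)). Qed.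

Lemma msupp_block_part i p mo :
  mo \in msupp (block_part i p) -> mnm_in_block blk i mo.
Proof. exact: msupp_filter. Qed.

Lemma outside_block_rest i p : outside_block i (block_rest i p).
Proof. by move=> mo; apply: msupp_filter. Qed.

Lemma outside_blockMl k p q : outside_block k p -> outside_block k (p * q).
Proof.
move=> hp mo /msuppM_le /allpairsP [[m1 m2] /= [m1p _ ->]].
by rewrite mnm_in_blockD negb_and (hp _ m1p).
Qed.

Lemma outside_blockMr k p q : outside_block k q -> outside_block k (p * q).
Proof.
move=> hq mo /msuppM_le /allpairsP [[m1 m2] /= [_ m2q ->]].
by rewrite mnm_in_blockD negb_and (hq _ m2q) orbT.
Qed.

End PolynomialBlocks.

Section Apolarity.
Variable n : nat.
Implicit Types (p q F : {mpoly CC[n]}).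

Lemma apolar_seq p F (s : seq 'X_{1..n}) : uniq s -> {subset msupp p <= s} ->
  apolar p F = \sum_(mo <- s) p@_mo *: mderivm mo F.
Proof.
move=> us sub.
rewrite -(big_rmcond_in (fun mo => mo \in msupp p)); last first.
  by move=> mo _; rewrite mcoeff_msupp negbK => /eqP ->; rewrite scale0r.
rewrite -big_filter /apolar; apply: perm_big; apply: uniq_perm.
- exact: msupp_uniq.
- exact: filter_uniq.
- by move=> x; rewrite mem_filter; case: (boolP (x \in msupp p)) => // /sub ->.
Qed.

Lemma apolarDl p q F : apolar (p + q) F = apolar p F + apolar q F.
Proof.
pose s := undup (msupp p ++ msupp q).
have s_uniq : uniq s by apply: undup_uniq.
have in_s x : (x \in s) = (x \in msupp p) || (x \in msupp q).
  by rewrite mem_undup mem_cat.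
rewrite (@apolar_seq (p + q) F s) //; last first.
  by move=> x /msuppD_le; rewrite in_s mem_cat.
rewrite (@apolar_seq p F s) //; last by move=> x xp; rewrite in_s xp.
rewrite (@apolar_seq q F s) //; last by move=> x xq; rewrite in_s xq orbT.
by rewrite -big_split /=; apply: eq_bigr => mo _; rewrite mcoeffD scalerDl.
Qed.

Lemma apolar_sumr (I : Type) (r : seq I) (P : pred I) p (F : I -> {mpoly CC[n]}) :
  apolar p (\sum_(k <- r | P k) F k) = \sum_(k <- r | P k) apolar p (F k).
Proof.
rewrite /apolar exchange_big /=; apply: eq_bigr => mo _.
by rewrite raddf_sum scaler_sumr.
Qed.

End Apolarity.

Section BlockApolarity.
Variables (n m : nat) (blk : 'I_n -> 'I_m).
Implicit Types (i k : 'I_m) (p F : {mpoly CC[n]}).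

Lemma in_blockP i p :
  in_block blk i p <-> {in msupp p, forall mo, mnm_in_block blk i mo}.
Proof.
by split=> h mo /h /mnm_in_blockP.
Qed.

Lemma in_block_block_part i p : in_block blk i (block_part blk i p).
Proof. by apply/in_blockP => mo; apply: msupp_block_part. Qed.

Lemma outside_block_linear i k t :
  t \is [in CC[n], 1.-homog] -> in_block blk i t -> k != i ->
  outside_block blk k t.
Proof.
move=> /dhomogP t_lin /in_blockP t_i nki mo mot.
apply: mnm_in_block_other (t_i _ mot) _ nki.
by rewrite -mdeg_eq0 [mdeg mo]t_lin.
Qed.

(* Each monomial of [p] differentiates [F] in a variable [F] does not contain. *)
Lemma apolar_outside_block k p F :
  outside_block blk k p -> in_block blk k F -> apolar p F = 0.
Proof.
move=> hp hF; rewrite /apolar big1_seq // => mo /andP [_ mop].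
have [j bj mo_j] := mnm_in_blockN (hp _ mop).
suff -> : mderivm mo F = 0 by rewrite scaler0.
apply/mpolyP => m'; rewrite mcoeff_mderivm mcoeff0.
have [/hF/(_ j bj)|/memN_msupp_eq0 ->] := boolP ((mo + m')%MM \in msupp F);
  last by rewrite mul0rn.
rewrite mnmDE => /eqP; rewrite addn_eq0 => /andP [/eqP mo_j0 _].
by rewrite mo_j0 in mo_j.
Qed.

Lemma apolar_sum_blocks i p (F : 'I_m -> {mpoly CC[n]}) :
  (forall k, in_block blk k (F k)) ->
  (forall k, k != i -> outside_block blk k p) ->
  apolar p (\sum_k F k) = apolar p (F i).
Proof.
move=> F_blk p_out; rewrite apolar_sumr (bigD1 i) //= big1 ?addr0 //.
by move=> k nki; apply: apolar_outside_block (p_out k nki) (F_blk k).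
Qed.

End BlockApolarity.

Section IdealGen.
Variables (n : nat) (S : {mpoly CC[n]} -> Prop).

Lemma ideal_gen0 : ideal_gen S 0.
Proof. by exists [::]; split => //; rewrite big_nil. Qed.

Lemma ideal_genD a b : ideal_gen S a -> ideal_gen S b -> ideal_gen S (a + b).
Proof.
move=> [s1 [h1 ->]] [s2 [h2 ->]]; exists (s1 ++ s2).
split; last by rewrite big_cat.
by move=> q; rewrite mem_cat => /orP [/h1|/h2].
Qed.

Lemma ideal_genM c s : S s -> ideal_gen S (c * s).
Proof.
move=> Ss; exists [:: (c, s)]; split; last by rewrite big_seq1.
by move=> q; rewrite mem_seq1 => /eqP ->.
Qed.

Lemma ideal_gen_mem s : S s -> ideal_gen S s.
Proof. by move=> /(ideal_genM 1); rewrite mul1r. Qed.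

Lemma ideal_gen_sub (S' : {mpoly CC[n]} -> Prop) a :
  (forall h, S h -> S' h) -> ideal_gen S a -> ideal_gen S' a.
Proof. by move=> SS' [s [hs ->]]; exists s; split => // q /hs /SS'. Qed.

End IdealGen.

Lemma outside_block_ideal (n m : nat) (blk : 'I_n -> 'I_m) (i : 'I_m)
    (p : {mpoly CC[n]}) :
  outside_block blk i p ->
  ideal_gen (fun h => exists2 j, blk j != i & h = 'X_j) p.
Proof.
move=> p_out; rewrite [p]mpolyE big_seq; apply: (big_ind (ideal_gen _)).
- exact: ideal_gen0.
- exact: ideal_genD.
move=> mo /p_out /mnm_in_blockN [j bj mo_j].
have Uj_mo : (U_(j) <= mo)%MM by rewrite lep1mP -lt0n.
rewrite -(submK Uj_mo) mpolyXD -mul_mpolyC mulrA.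
by apply: ideal_genM; exists j.
Qed.

Theorem mainTheorem1 (n m d : nat) (blk : 'I_n -> 'I_m)
    (F t : 'I_m -> {mpoly CC[n]}) :
  (2 <= d)%N ->
  (forall i, F i \is [in CC[n], d.-homog] /\ in_block blk i (F i)) ->
  (forall i, t i \is [in CC[n], 1.-homog] /\ in_block blk i (t i)) ->
  forall g : {mpoly CC[n]},
    colon (perp (\sum_(i < m) F i)) (ideal_gen (fun h => exists i, h = t i)) g ->
    forall i : 'I_m, ideal_gen (J_gens blk (F i) (t i) i) g.
Proof.
move=> _ HF Ht g Hg i.
have F_blk k : in_block blk k (F k) by case: (HF k).
have [t_lin t_blk] := Ht i.
have g_split := block_part_rest blk i g.
have tg_perp : perp (\sum_k F k) (t i * g).
  by rewrite /perp mulrC; apply: Hg; apply: ideal_gen_mem; exists i.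
have tgi_perp : perp (F i) (t i * block_part blk i g).
  have tr_0 : apolar (t i * block_rest blk i g) (F i) = 0.
    apply: apolar_outside_block (F_blk i).
    exact/outside_blockMr/outside_block_rest.
  move: tg_perp; rewrite /perp (apolar_sum_blocks (i:=i) F_blk); last first.
    by move=> k nki; apply/outside_blockMl/(outside_block_linear t_lin t_blk).
  by rewrite {1}g_split mulrDr apolarDl tr_0 addr0.
rewrite g_split; apply: ideal_genD.
  by apply: ideal_gen_mem; left; split => //; apply: in_block_block_part.
have r_out := outside_block_rest (blk := blk) (i := i) (p := g).
apply: ideal_gen_sub (outside_block_ideal r_out).
by move=> h [j bj ->]; right; right; exists j.
Qed.
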